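(* Let $(\mathbf F,\prec)$ be an IS-family over a finite set $V$. Then for every $S\in\mathbf F$, $hat(S)=S\setminus Vis(S)$.
   Context: Let $V$ be a finite set, $n=|V|$, $\mathbf F$ a family of subsets of $V$ and $\prec$ a strict partial order on $\mathbf F$; $S\preceq S'$ means $S\prec S'$ or $S=S'$. For $S\in\mathbf F$ and $v\in V$, $S$ covers $v$ if there is $S'\in\mathbf F$ with $S'\prec S$ and $v\in S'\setminus S$. $Pred(S)$ is the set of $S'\in\mathbf F$ with $S'\prec S$ such that there is no $S''\in\mathbf F$ with $S'\prec S''\prec S$. The visible set $Vis(S)$ is the set of $v\in V$ such that $v\in S'$ for some $S'\in Pred(S)$ and $v$ is not covered by any element of $Pred(S)$. For $S\in\mathbf F$ and $v\in S$, a witness of $v$ w.r.t. $S$ is a $\prec$-minimal element $S'\in\mathbf F$ with $S\prec S'$ and $v\in S\setminus S'$. $(\mathbf F,\prec)$ is an IS-family if: (SE) there is a unique element $sm(\mathbf F)\in\mathbf F$ with $sm(\mathbf F)\prec S$ for every other $S\in\mathbf F$; (SM) $S_1\prec S_2$ implies $|S_1|<|S_2|$; (SW) for every $S\in\mathbf F$ and $v\in S$ there is at most one witness of $v$ w.r.t. $S$; (TE) if $S_1\prec S_2\prec S_3$ are in $\mathbf F$ and $v\in S_1\setminus S_2$ then $v\in S_1\setminus S_3$; (LVS) for every $S\in\mathbf F$ and $S'\in Pred(S)$, $|S'|\le |Vis(S)|$; (DVS) for every $S\in\mathbf F$ with $S\ne sm(\mathbf F)$, $Vis(S)$ is not a subset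 of $S$; (EC) $sm(\mathbf F)$ can be computed in $O(n^3)$ time, for given $S\in\mathbf F$ and $v\in S$ the witness of $v$ w.r.t. $S$ can be computed (or its nonexistence reported) in $O(n^3)$ time, and $S_1\prec S_2$ can be tested in $O(|S_1|)$ time. Notation: $hat(S)=S\setminus\bigcup_{S'\prec S}S'$. *)

From mathcomp Require Import all_boot.
Set Implicit Arguments. Unset Strict Implicit. Unset Printing Implicit Defensive.

(* V : finite ground set (a finType), F : family of subsets of V,
   prec : a relation on subsets of V, considered only on members of F. *)
Section ISFamily.
Variables (V : finType) (F : {set {set V}}) (prec : rel {set V}).

Definition strict_po_on : Prop :=
  (forall S, S \in F -> ~~ prec S S) /\
  (forall S1 S2 S3, S1 \in F -> S2 \in F -> S3 \in F ->
     prec S1 S2 -> prec S2 S3 -> prec S1 S3).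

Definition covers (S : {set V}) (v : V) : bool :=
  [exists S' in F, prec S' S && (v \in S' :\: S)].

Definition Pred (S : {set V}) : {set {set V}} :=
  [set S' in F | prec S' S &&
     ~~ [exists S'' in F, prec S' S'' && prec S'' S]].

Definition Vis (S : {set V}) : {set V} :=
  [set v | [exists S' in Pred S, v \in S'] &&
           ~~ [exists S' in Pred S, covers S' v]].

Definition is_witness (S : {set V}) (v : V) (S' : {set V}) : bool :=
  [&& S' \in F, prec S S', v \in S :\: S' &
      ~~ [exists S'' in F, [&& prec S S'', v \in S :\: S'' & prec S'' S']]].

Definition is_smallest (x : {set V}) : Prop :=
  x \in F /\ forall S, S \in F -> S != x -> prec x S.

Definition hat (S : {set V}) : {set V} :=
  S :\: \bigcup_(S' in F | prec S' S) S'.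

Definition IS_family : Prop :=
  strict_po_on /\
      (exists x, is_smallest x /\ forall y, is_smallest y -> y = x) /\
      (* SM *)
      (forall S1 S2, S1 \in F -> S2 \in F -> prec S1 S2 -> #|S1| < #|S2|) /\
      (forall S v S1 S2, S \in F -> v \in S ->
         is_witness S v S1 -> is_witness S v S2 -> S1 = S2) /\
      (* TE *)
      (forall S1 S2 S3 v, S1 \in F -> S2 \in F -> S3 \in F ->
         prec S1 S2 -> prec S2 S3 -> v \in S1 :\: S2 -> v \in S1 :\: S3) /\
      (forall S S', S \in F -> S' \in Pred S -> #|S'| <= #|Vis S|) /\
      (forall S, S \in F -> ~ is_smallest S -> ~~ (Vis S \subset S)).

End ISFamily.

From mathcomp Require Import all_boot.

Set Implicit Arguments.
Unset Strict Implicit.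
Unset Printing Implicit Defensive.

(* Only transitivity, (SM) and (TE) are needed.  By (SM), a member of
   maximal size among the [T] with [S' <= T < S] is an immediate
   predecessor of [S], so every predecessor lies below an immediate one.
   By (TE), an element of [S] that lies in some [S' < S] also lies in
   every [T] with [S' < T < S]; hence it lies in an immediate predecessor
   and is covered by none of them, i.e. it is visible. *)

Section HatVis.

Variables (V : finType) (F : {set {set V}}) (prec : rel {set V}).

Hypothesis prec_trans : forall S1 S2 S3, S1 \in F -> S2 \in F -> S3 \in F ->
  prec S1 S2 -> prec S2 S3 -> prec S1 S3.
Hypothesis prec_card : forall S1 S2, S1 \in F -> S2 \in F ->
  prec S1 S2 -> #|S1| < #|S2|.
Hypothesis prec_TE : forall S1 S2 S3 v, S1 \in F -> S2 \in F -> S3 \in F ->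
  prec S1 S2 -> prec S2 S3 -> v \in S1 :\: S2 -> v \in S1 :\: S3.

Lemma PredP S S' : reflect [/\ S' \in F, prec S' S &
    ~~ [exists S'' in F, prec S' S'' && prec S'' S]] (S' \in Pred F prec S).
Proof. by rewrite inE; apply: and3P. Qed.

Lemma mem_between S1 S2 S3 v : S1 \in F -> S2 \in F -> S3 \in F ->
  prec S1 S2 -> prec S2 S3 -> v \in S1 -> v \in S3 -> v \in S2.
Proof.
move=> S1F S2F S3F p12 p23 vS1 vS3; apply: contraT => nvS2.
by have := prec_TE (v := v) S1F S2F S3F p12 p23; rewrite !inE nvS2 vS1 vS3 => /(_ isT).
Qed.

Lemma Pred_above S S' : S \in F -> S' \in F -> prec S' S ->
  exists2 T, T \in Pred F prec S & (T == S') || prec S' T.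
Proof.
move=> SF S'F pS'S.
pose between T := [&& T \in F, (T == S') || prec S' T & prec T S].
have betweenS' : between S' by rewrite /between S'F eqxx pS'S.
case: (arg_maxnP (fun T : {set V} => #|T|) betweenS') => T.
move=> /and3P[TF le_S'T pTS] T_max; exists T => //.
apply/PredP; split=> //; apply/existsP => -[U /and3P[UF pTU pUS]].
have betweenU : between U.
  rewrite /between UF pUS andbT; apply/orP; right.
  by case/orP: le_S'T => [/eqP<- | pS'T] //; apply: prec_trans pTU.
by have := leq_trans (prec_card TF UF pTU) (T_max U betweenU); rewrite ltnn.
Qed.

Lemma Pred_not_covers S P v : S \in F -> v \in S -> P \in Pred F prec S ->
  ~~ covers F prec P v.
Proof.
move=> SF vS /PredP[PF pPS _]; apply/existsP => -[U /andP[UF /andP[pUP]]].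
rewrite inE => /andP[nvP vU].
by rewrite (mem_between UF PF SF pUP pPS vU vS) in nvP.
Qed.

Lemma mem_Vis S v : S \in F -> v \in S ->
  (v \in Vis F prec S) = (v \in \bigcup_(S' in F | prec S' S) S').
Proof.
move=> SF vS; apply/idP/bigcupP.
  rewrite inE => /andP[/existsP[P /andP[/PredP[PF pPS _] vP]] _].
  by exists P; rewrite ?PF.
move=> [S' /andP[S'F pS'S] vS'].
have [T TPred le_S'T] := Pred_above SF S'F pS'S.
have [TF pTS _] := PredP _ _ TPred.
have vT : v \in T.
  by case/orP: le_S'T => [/eqP-> | pS'T] //; apply: mem_between pS'T pTS vS' vS.
rewrite inE; apply/andP; split; first by apply/existsP; exists T; rewrite TPred.
by apply/existsP => -[P /andP[PPred]]; rewrite (negbTE (Pred_not_covers SF vS PPred)).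
Qed.

End HatVis.

Theorem proposition1 (V : finType) (F : {set {set V}}) (prec : rel {set V}) :
  IS_family F prec ->
  forall S, S \in F -> hat F prec S = S :\: Vis F prec S.
Proof.
move=> [[_ prec_trans] [_ [prec_card [_ [prec_TE _]]]]] S SF.
apply/setP => v; rewrite /hat !in_setD.
case vS: (v \in S); rewrite ?andbF ?andbT //=.
by rewrite (mem_Vis prec_trans prec_card prec_TE SF vS).
Qed.
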